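(* Let $Q=\Diamond abcd$ be a convex quadrilateral with vertices $a,b,c,d$ in clockwise order, such that the diagonal $\overline{ac}$ is horizontal, $|ac|=1$, and $1$ is the diameter of $Q$. Let the smallest axis-parallel rectangle containing $Q$ have horizontal side length $1$ and vertical side length $W$ with $\frac{2}{\sqrt5}<W\le 1$, with $a$ on its left side, $b$ on its top side, $c$ on its right side and $d$ on its bottom side. Then there exists a triangle contained in $Q$ whose smallest side has length at least $\frac{\sqrt{1+5W^2}}{4}$. *)

From Stdlib Require Import Reals.
Open Scope R_scope.

Definition point := (R * R)%type.

Definition px (p : point) : R := fst p.
Definition py (p : point) : R := snd p.

Definition edist (p q : point) : R :=
  sqrt ((px p - px q) ^ 2 + (py p - py q) ^ 2).

(* Signed area (cross product) of (q - p) x (r - p); negative = clockwise turn *)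
Definition orient (p q r : point) : R :=
  (px q - px p) * (py r - py p) - (py q - py p) * (px r - px p).

Definition convex_quad_cw (a b c d : point) : Prop :=
  orient a b c < 0 /\ orient b c d < 0 /\ orient c d a < 0 /\ orient d a b < 0.

Definition quad_region (a b c d : point) (p : point) : Prop :=
  exists la lb lc ld : R,
    0 <= la /\ 0 <= lb /\ 0 <= lc /\ 0 <= ld /\ la + lb + lc + ld = 1 /\
    px p = la * px a + lb * px b + lc * px c + ld * px d /\
    py p = la * py a + lb * py b + lc * py c + ld * py d.

Definition tri_region (p q r : point) (z : point) : Prop :=
  exists l1 l2 l3 : R,
    0 <= l1 /\ 0 <= l2 /\ 0 <= l3 /\ l1 + l2 + l3 = 1 /\
    px z = l1 * px p + l2 * px q + l3 * px r /\
    py z = l1 * py p + l2 * py q + l3 * py r.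

Definition is_triangle (p q r : point) : Prop := orient p q r <> 0.

Definition has_diameter (S : point -> Prop) (D : R) : Prop :=
  (forall p q, S p -> S q -> edist p q <= D) /\
  (exists p q, S p /\ S q /\ edist p q = D).

Definition min3 (x y z : R) : R := Rmin x (Rmin y z).

(* Reflecting in the two axes, we may place a = (0,0), c = (1,0), b = (x,h1),
   d = (y,-h2) with h2 <= h1 and x >= 1/2, so that W = h1 + h2.  Take the
   triangle with vertices a, b and e = (3c + 2d)/5 on the side cd.  Then
   |ab|^2 >= (1 + W^2)/4 and the height of b above e is at least 7W/10, while
   |bd| <= 1 keeps d from lying far left of b, which bounds |ae| from below;
   each of these beats (1 + 5W^2)/16 once W^2 > 4/5. *)
From Stdlib Require Import Reals Lra Psatz.
Open Scope R_scope.

Definition sqdist (p q : point) : R := (px p - px q) ^ 2 + (py p - py q) ^ 2.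

Lemma sqdist_le_1 (p q : point) : edist p q <= 1 -> sqdist p q <= 1.
Proof.
  unfold edist; fold (sqdist p q); intros H.
  assert (Hpos : 0 <= sqdist p q).
  { unfold sqdist; apply Rplus_le_le_0_compat; apply pow2_ge_0. }
  rewrite <- (sqrt_sqrt (sqdist p q)) by exact Hpos.
  rewrite <- (Rmult_1_l 1).
  apply Rmult_le_compat; auto using sqrt_pos.
Qed.

Lemma sqrt_div4_le_edist (m : R) (p q : point) :
  m / 16 <= sqdist p q -> sqrt m / 4 <= edist p q.
Proof.
  intros H; unfold edist; fold (sqdist p q).
  destruct (Rle_lt_dec 0 m) as [Hm | Hm].
  - assert (H16 : sqrt 16 = 4).
    { replace 16 with (4 * 4) by ring; apply sqrt_square; lra. }
    replace (sqrt m / 4) with (sqrt (m / 16))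
      by (rewrite sqrt_div_alt, H16 by lra; reflexivity).
    now apply sqrt_le_1_alt.
  - rewrite (sqrt_neg_0 m) by lra.
    unfold Rdiv; rewrite Rmult_0_l; apply sqrt_pos.
Qed.

Lemma min3_ge (t x y z : R) : t <= x -> t <= y -> t <= z -> min3 x y z >= t.
Proof.
  intros; unfold min3; apply Rle_ge.
  repeat apply Rmin_glb; assumption.
Qed.

Lemma sqr_lt_of_div_sqrt_lt (c k W : R) :
  0 <= c -> 0 < k -> c / sqrt k < W -> c ^ 2 < k * W ^ 2.
Proof.
  intros Hc Hk HW.
  assert (Hs : 0 < sqrt k) by now apply sqrt_lt_R0.
  assert (Hlt : c < W * sqrt k).
  { apply (Rmult_lt_compat_r (sqrt k)) in HW; [|exact Hs].
    unfold Rdiv in HW; rewrite Rmult_assoc, Rinv_l in HW; lra. }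
  rewrite <- (sqrt_sqrt k) by lra.
  nra.
Qed.

Definition convex (Q : point -> Prop) : Prop :=
  forall p q r, Q p -> Q q -> Q r -> forall z, tri_region p q r z -> Q z.

Definition mix (p q : point) (s : R) : point :=
  (s * px p + (1 - s) * px q, s * py p + (1 - s) * py q).

Lemma convex_mix (Q : point -> Prop) (p q : point) (s : R) :
  convex Q -> Q p -> Q q -> 0 <= s <= 1 -> Q (mix p q s).
Proof.
  intros HQ Hp Hq Hs; apply (HQ p q q Hp Hq Hq).
  exists s, (1 - s), 0; unfold mix, px, py; simpl.
  repeat split; lra.
Qed.

Lemma quad_region_convex (a b c d : point) : convex (quad_region a b c d).
Proof.
  intros p q r [pa [pb [pc [pd [? [? [? [? [? [Hpx Hpy]]]]]]]]]]
               [qa [qb [qc [qd [? [? [? [? [? [Hqx Hqy]]]]]]]]]]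
               [ra [rb [rc [rd [? [? [? [? [? [Hrx Hry]]]]]]]]]]
               z [l1 [l2 [l3 [? [? [? [? [Hzx Hzy]]]]]]]].
  exists (l1 * pa + l2 * qa + l3 * ra), (l1 * pb + l2 * qb + l3 * rb),
         (l1 * pc + l2 * qc + l3 * rc), (l1 * pd + l2 * qd + l3 * rd).
  repeat split; nra.
Qed.

Lemma quad_region_a (a b c d : point) : quad_region a b c d a.
Proof. exists 1, 0, 0, 0; repeat split; lra. Qed.

Lemma quad_region_b (a b c d : point) : quad_region a b c d b.
Proof. exists 0, 1, 0, 0; repeat split; lra. Qed.

Lemma quad_region_c (a b c d : point) : quad_region a b c d c.
Proof. exists 0, 0, 1, 0; repeat split; lra. Qed.

Lemma quad_region_d (a b c d : point) : quad_region a b c d d.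
Proof. exists 0, 0, 0, 1; repeat split; lra. Qed.

(* With [s] and [t] equal to [1] or [-1], [frame o s t] is an isometry
   sending the origin to [o]; [coords o s t] is its inverse. *)
Definition frame (o : point) (s t : R) (p : point) : point :=
  (px o + s * px p, py o + t * py p).

Definition coords (o : point) (s t : R) (p : point) : point :=
  frame (- s * px o, - t * py o) s t p.

Lemma sqr_sign_mul (u x : R) : u ^ 2 = 1 -> (u * x) ^ 2 = x ^ 2.
Proof. intros Hu; rewrite Rpow_mult_distr, Hu; ring. Qed.

Section Frame.

Variables (o : point) (s t : R).
Hypotheses (Hs : s ^ 2 = 1) (Ht : t ^ 2 = 1).

Lemma sqdist_frame (p q : point) :
  sqdist (frame o s t p) (frame o s t q) = sqdist p q.
Proof.
  unfold sqdist, frame, px, py; cbn [fst snd].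
  replace (fst o + s * fst p - (fst o + s * fst q)) with (s * (fst p - fst q)) by ring.
  replace (snd o + t * snd p - (snd o + t * snd q)) with (t * (snd p - snd q)) by ring.
  now rewrite !sqr_sign_mul.
Qed.

Lemma orient_frame (p q r : point) :
  orient (frame o s t p) (frame o s t q) (frame o s t r) = s * t * orient p q r.
Proof. unfold orient, frame, px, py; cbn [fst snd]; ring. Qed.

Lemma frame_mix (p q : point) (r : R) :
  frame o s t (mix p q r) = mix (frame o s t p) (frame o s t q) r.
Proof. unfold frame, mix, px, py; cbn [fst snd]; f_equal; ring. Qed.

Lemma frame_origin : frame o s t (0, 0) = o.
Proof.
  unfold frame, px, py; cbn [fst snd]; rewrite !Rmult_0_r, !Rplus_0_r.
  symmetry; apply surjective_pairing.
Qed.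

Lemma frame_coords (p : point) : frame o s t (coords o s t p) = p.
Proof.
  destruct p as [x y]; unfold coords, frame, px, py; cbn [fst snd].
  replace (fst o + s * (- s * fst o + s * x)) with (x + (1 - s ^ 2) * (fst o - x)) by ring.
  replace (snd o + t * (- t * snd o + t * y)) with (y + (1 - t ^ 2) * (snd o - y)) by ring.
  rewrite Hs, Ht; f_equal; ring.
Qed.

End Frame.

Lemma normalized_large_triangle (B D : point) :
  1/2 <= px B -> 0 <= px D -> 0 <= - py D <= py B -> sqdist B D <= 1 ->
  4 < 5 * (py B - py D) ^ 2 ->
  is_triangle (0, 0) B (mix (1, 0) D (3/5)) /\
  (1 + 5 * (py B - py D) ^ 2) / 16 <= sqdist (0, 0) B /\
  (1 + 5 * (py B - py D) ^ 2) / 16 <= sqdist B (mix (1, 0) D (3/5)) /\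
  (1 + 5 * (py B - py D) ^ 2) / 16 <= sqdist (mix (1, 0) D (3/5)) (0, 0).
Proof.
  destruct B as [x h1], D as [y h2']; unfold is_triangle, orient, sqdist, mix, px, py.
  cbn [fst snd]; intros Hx Hy [Hh2 Hh12] Hbd HW.
  remember (h1 - h2') as W eqn:HWdef.
  replace h2' with (h1 - W) in * by lra; clear HWdef.
  assert (HW0 : 0 < W) by nra.
  repeat split.
  - apply Rlt_not_eq; nra.
  - assert (Hx2 : 1/4 <= (0 - x) ^ 2) by nra.
    assert (Hh1 : W ^ 2 / 4 <= (0 - h1) ^ 2) by nra.
    assert (W ^ 2 <= 1) by (assert (0 <= (x - y) ^ 2) by apply pow2_ge_0; lra).
    lra.
  - assert (Hheight : 7/10 * W <= h1 - 2/5 * (h1 - W)) by lra.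
    assert (0 <= (x - (3/5 * 1 + (1 - 3/5) * y)) ^ 2) by apply pow2_ge_0.
    nra.
  - assert (0 <= ((1 - 3/5) * (h1 - W)) ^ 2) by apply pow2_ge_0.
    destruct (Rle_lt_dec (1/2) y) as [Hy2 | Hy2].
    + assert (W ^ 2 <= 1) by (assert (0 <= (x - y) ^ 2) by apply pow2_ge_0; lra).
      assert (16/25 <= (3/5 * 1 + (1 - 3/5) * y - 0) ^ 2) by nra.
      nra.
    + assert (Hbd' : (1/2 - y) ^ 2 + W ^ 2 <= 1) by nra.
      (* with u = 1/2 - y this reduces to 189 u^2 - 256 u + 106 >= 0,
         whose discriminant is negative *)
      assert (0 <= (1/2 - y - 128/189) ^ 2) by apply pow2_ge_0.
      nra.
Qed.

Definition has_large_triangle (Q : point -> Prop) (m : R) : Prop :=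
  exists p q r : point,
    is_triangle p q r /\
    (forall z, tri_region p q r z -> Q z) /\
    min3 (edist p q) (edist q r) (edist r p) >= m.

Lemma large_triangle_in_frame (Q : point -> Prop) (o B D : point) (s t W : R) :
  s ^ 2 = 1 -> t ^ 2 = 1 -> convex Q ->
  Q (frame o s t (0, 0)) -> Q (frame o s t (1, 0)) ->
  Q (frame o s t B) -> Q (frame o s t D) ->
  1/2 <= px B -> 0 <= px D -> 0 <= - py D <= py B -> sqdist B D <= 1 ->
  py B - py D = W -> 4 < 5 * W ^ 2 ->
  has_large_triangle Q (sqrt (1 + 5 * W ^ 2) / 4).
Proof.
  intros Hs Ht HQ HA HC HB HD HBx HDx HBDy HBD <- HW.
  destruct (normalized_large_triangle B D) as [Htri [Hab [Hbe Hea]]]; auto.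
  exists (frame o s t (0, 0)), (frame o s t B), (frame o s t (mix (1, 0) D (3/5))).
  split; [|split].
  - unfold is_triangle; rewrite orient_frame.
    assert (s <> 0) by (intros ->; simpl in Hs; lra).
    assert (t <> 0) by (intros ->; simpl in Ht; lra).
    repeat apply Rmult_integral_contrapositive_currified; assumption.
  - apply HQ; try assumption.
    rewrite frame_mix; apply convex_mix; auto; lra.
  - apply min3_ge; apply sqrt_div4_le_edist; rewrite sqdist_frame; lra.
Qed.

Lemma large_triangle (Q : point -> Prop) (o q u v : point) (s t W : R) :
  s ^ 2 = 1 -> t ^ 2 = 1 -> convex Q -> Q o -> Q q -> Q u -> Q v ->
  px q = px o + s -> py q = py o ->
  1/2 <= s * (px u - px o) -> 0 <= s * (px v - px o) ->
  0 <= t * (py o - py v) <= t * (py u - py o) ->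
  sqdist u v <= 1 -> t * (py u - py v) = W -> 4 < 5 * W ^ 2 ->
  has_large_triangle Q (sqrt (1 + 5 * W ^ 2) / 4).
Proof.
  intros Hs Ht HQ Ho Hq Hu Hv Hqx Hqy Hux Hvx Hy Huv HWdef HW.
  assert (Hc : frame o s t (1, 0) = q).
  { destruct q as [qx qy]; unfold frame, px, py in *; cbn [fst snd] in *.
    f_equal; lra. }
  assert (Huv' : sqdist (coords o s t u) (coords o s t v) <= 1)
    by (unfold coords; rewrite sqdist_frame; assumption).
  apply (large_triangle_in_frame Q o (coords o s t u) (coords o s t v) s t W);
    rewrite ?frame_origin, ?Hc, ?frame_coords; auto.
  all: unfold coords, frame, px, py in *; cbn [fst snd] in *; lra.
Qed.

Theorem theorem2 (a b c d : point) (W : R) :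
  convex_quad_cw a b c d ->
  (* diagonal ac horizontal, of length 1 *)
  py a = py c ->
  edist a c = 1 ->
  (* diameter of Q is 1 *)
  has_diameter (quad_region a b c d) 1 ->
  (* smallest axis-parallel bounding rectangle: [px a, px c] x [py d, py b],
     so a on the left side, c on the right, b on top, d on the bottom *)
  (forall p, quad_region a b c d p ->
     px a <= px p <= px c /\ py d <= py p <= py b) ->
  px c - px a = 1 ->
  py b - py d = W ->
  2 / sqrt 5 < W <= 1 ->
  exists p q r : point,
    is_triangle p q r /\
    (forall z, tri_region p q r z -> quad_region a b c d z) /\
    min3 (edist p q) (edist q r) (edist r p) >= sqrt (1 + 5 * W ^ 2) / 4.
Proof.
  intros _ Hac _ [Hdiam _] Hbox Hwidth Hheight [HWlow _].
  pose proof (quad_region_convex a b c d) as HQ.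
  pose proof (quad_region_a a b c d) as Ha; pose proof (quad_region_b a b c d) as Hb.
  pose proof (quad_region_c a b c d) as Hc; pose proof (quad_region_d a b c d) as Hd.
  assert (Hbd : sqdist b d <= 1) by now apply sqdist_le_1, Hdiam.
  assert (Hdb : sqdist d b <= 1) by now apply sqdist_le_1, Hdiam.
  assert (HW5 : 4 < 5 * W ^ 2).
  { replace 4 with (2 ^ 2) by ring; apply sqr_lt_of_div_sqrt_lt; lra. }
  destruct (Hbox a Ha) as [_ [Hda Hab]].
  destruct (Hbox b Hb) as [[Hlb Hrb] _].
  destruct (Hbox d Hd) as [[Hld Hrd] _].
  destruct (Rle_lt_dec (py a - py d) (py b - py a)) as [Hb_far | Hd_far].
  - destruct (Rle_lt_dec (1/2) (px b - px a)) as [Hb_right | Hb_left].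
    + apply (large_triangle _ a c b d 1 1 W); auto; repeat split; first [ring | lra].
    + apply (large_triangle _ c a b d (-1) 1 W); auto; repeat split; first [ring | lra].
  - destruct (Rle_lt_dec (1/2) (px d - px a)) as [Hd_right | Hd_left].
    + apply (large_triangle _ a c d b 1 (-1) W); auto; repeat split; first [ring | lra].
    + apply (large_triangle _ c a d b (-1) (-1) W); auto; repeat split; first [ring | lra].
Qed.
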